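(* Let $T\subseteq\mathfrak{S}_n$ be invariant under the modified Foata–Strehl action. Then $\Psi'$ restricts to a bijection $T\to T$, and $\operatorname{veh}(\pi)=\operatorname{des}(\Psi'(\pi))$ for all $\pi\in T$.
   Context: Permutations $\pi\in\mathfrak{S}_n$ are words $a_1\cdots a_n$; $\operatorname{des}(\pi)=|\{i\in[n-1]:a_i>a_{i+1}\}|$. Set $a_0=a_{n+1}=n+1$; a letter $a_k$ is a valley if $a_{k-1}>a_k<a_{k+1}$, a peak if $a_{k-1}<a_k>a_{k+1}$, a double ascent if $a_{k-1}<a_k<a_{k+1}$, a double descent if $a_{k-1}>a_k>a_{k+1}$. For $x\in[n]$: if $x$ is a double descent, $\varphi'_x(\pi)$ moves $x$ to between the first pair of consecutive letters $a_i,a_{i+1}$ to the right of $x$ with $a_i<x<a_{i+1}$; if a double ascent, to between the first pair to the left with $a_i>x>a_{i+1}$; if a peak or valley, $\varphi'_x(\pi)=\pi$. The modified Foata–Strehl action is the $\mathbb{Z}_2^n$-action generated by these commuting involutions; $T$ is invariant if $\varphi'_x(T)\subseteq T$ for all $x$. The decreasing binary tree of a word $w$: empty if $w$ empty; otherwise $w=LmR$ with $m$ the greatest letter, root $m$, left subtree the tree of $L$, right subtree the tree of $R$. $r_\pi(x)$ is the number of right edges on the root-to-$x$ path in the tree of $\pi$, $\operatorname{Odd}(\pi)=\{x:r_\pi(x)\text{ odd}\}$, and $\Psi'(\pi)=\prod_{x\in\operatorname{Odd}(\pi)}\varphi'_x(\pi)$. The unordered decreasing tree $T(w;\infty)$ ($\infty$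 a symbol larger than all letters): if $w$ is empty it is a single vertex $\infty$; otherwise write $w=m_1w_1m_2w_2\cdots m_kw_k$ with $m_1,\dots,m_k$ the left-to-right maxima of $w$, and $T(w;\infty)$ has root $\infty$ with subtrees $T(w_i;m_i)$ (defined in the same way with root labeled $m_i$). $\operatorname{veh}(\pi)$ is the number of non-root vertices of even height (root at height $0$) in $T(\pi;\infty)$. *)

From mathcomp Require Import all_boot.
Set Implicit Arguments. Unset Strict Implicit. Unset Printing Implicit Defensive.

Definition is_perm_word (n : nat) (w : seq nat) : bool := perm_eq w (iota 1 n).

Definition des (w : seq nat) : nat :=
  count (fun p : nat * nat => p.2 < p.1) (zip w (behead w)).

(* sentinel a_0 = a_{n+1} = n+1 (n = size w) *)
Definition sent (w : seq nat) : nat := (size w).+1.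

Definition left_nb (w : seq nat) (x : nat) : nat :=
  nth (sent w) (sent w :: w) (index x w).
Definition right_nb (w : seq nat) (x : nat) : nat :=
  nth (sent w) w (index x w).+1.

Definition is_dd (w : seq nat) (x : nat) : bool :=
  (x \in w) && (x < left_nb w x) && (right_nb w x < x).
Definition is_da (w : seq nat) (x : nat) : bool :=
  (x \in w) && (left_nb w x < x) && (x < right_nb w x).

(* remove x and reinsert it between the first pair a_i, a_{i+1} to the
   right of x's position with a_i < x < a_{i+1} (a_{n+1} = n+1). *)
Definition move_right (w : seq nat) (x : nat) : seq nat :=
  let k := index x w in
  let u := take k w in
  let v := drop k.+1 w in
  let j := find (fun p : nat * nat => (p.1 < x) && (x < p.2))
                (zip v (rcons (behead v) (sent w))) in
  u ++ take j.+1 v ++ x :: drop j.+1 v.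

(* the modified Foata--Strehl involution phi'_x; moving a double ascent to
   the left is the mirror image (under reversal) of moving a double descent
   to the right *)
Definition phi' (x : nat) (w : seq nat) : seq nat :=
  if is_dd w x then move_right w x
  else if is_da w x then rev (move_right (rev w) x)
  else w.

Inductive btree := BLeaf | BNode of btree & nat & btree.

Definition maxw (w : seq nat) : nat := foldr maxn 0 w.

(* fuel k; k = size w suffices *)
Fixpoint dbt_f (k : nat) (w : seq nat) : btree :=
  match k with
  | 0 => BLeaf
  | k'.+1 =>
    if w is [::] then BLeaf else
    let m := maxw w in
    let i := index m w in
    BNode (dbt_f k' (take i w)) m (dbt_f k' (drop i.+1 w))
  end.

Definition dbt (w : seq nat) : btree := dbt_f (size w) w.

Fixpoint blabels (t : btree) : seq nat :=
  match t with
  | BLeaf => [::]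
  | BNode l m r => blabels l ++ m :: blabels r
  end.

Fixpoint rights (t : btree) (x : nat) : nat :=
  match t with
  | BLeaf => 0
  | BNode l m r =>
    if x == m then 0
    else if x \in blabels l then rights l x else (rights r x).+1
  end.

Definition r_pi (w : seq nat) (x : nat) : nat := rights (dbt w) x.

Definition Odd (w : seq nat) : seq nat :=
  [seq x <- iota 1 (size w) | odd (r_pi w x)].

Definition Psi' (w : seq nat) : seq nat := foldr phi' w (Odd w).

Inductive rtree := RNode of nat & seq rtree.

(* decomposition w = m1 w1 m2 w2 ... mk wk along left-to-right maxima *)
Fixpoint lrblocks_f (k : nat) (w : seq nat) : seq (nat * seq nat) :=
  match k, w with
  | 0, _ => [::]
  | _, [::] => [::]
  | k'.+1, a :: s =>
    let j := find (fun b => a < b) s in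
    (a, take j s) :: lrblocks_f k' (drop j s)
  end.

Definition lrblocks (w : seq nat) := lrblocks_f (size w) w.

Fixpoint utree_f (k : nat) (w : seq nat) (r : nat) : rtree :=
  match k with
  | 0 => RNode r [::]
  | k'.+1 => RNode r [seq utree_f k' p.2 p.1 | p <- lrblocks w]
  end.

(* root labelled by (size w).+1, playing the role of infinity *)
Definition utree (w : seq nat) : rtree := utree_f (size w).+1 w (size w).+1.

Fixpoint even_count (t : rtree) (h : nat) : nat :=
  let: RNode _ cs := t in
  (~~ odd h) + sumn [seq even_count c h.+1 | c <- cs].

(* non-root vertices of even height (root at height 0) *)
Definition veh (w : seq nat) : nat :=
  let: RNode _ cs := utree w in sumn [seq even_count c 1 | c <- cs].

(* In the decreasing binary tree of a permutation, the letters with exactly one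
   child are the double ascents and double descents, and phi'_x exchanges the
   two subtrees of x, one of them empty; the in-order reading is otherwise
   unchanged. Hence Psi'(pi) is the reading of the tree in which the one-child
   nodes reached by an odd number of right edges are flipped. This flipping is
   injective on trees, so Psi' maps the finite set T injectively into itself,
   hence onto it.
   In T(pi; infty) the left-to-right-maxima decomposition of L m R is that of L
   followed by the block (m, R), so the height of a node is one plus its number
   of right edges, and veh(pi) counts the nodes with an odd number of right
   edges. A short induction shows that these are as many as the nodes having a
   right child after the flip, i.e. the descents of Psi'(pi). *)

From mathcomp Require Import all_boot zify.
From Stdlib Require Import ClassicalEpsilon.
Set Implicit Arguments. Unset Strict Implicit. Unset Printing Implicit Defensive.

Lemma uniq_cat_cons (T : eqType) (s t : seq T) m : uniq (s ++ m :: t) ->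
  [/\ uniq s, uniq t, m \notin s, m \notin t & forall y, y \in s -> y \notin t].
Proof.
rewrite cat_uniq [has _ (_ :: _)]/= cons_uniq => /and3P [us /norP [ms /hasPn st] /andP [mt ut]].
by split=> // y ys; apply/negP=> yt; move: (st y yt); rewrite ys.
Qed.

Lemma head_rev (T : Type) (x0 : T) s : head x0 (rev s) = last x0 s.
Proof. by case/lastP: s => // s a; rewrite rev_rcons last_rcons. Qed.

Lemma take_index_cat (T : eqType) (w : seq T) m : m \in w ->
  take (index m w) w ++ m :: drop (index m w).+1 w = w.
Proof.
move=> mw; rewrite -[RHS](cat_take_drop (index m w)); congr (_ ++ _).
by rewrite (drop_nth m (_ : index m w < size w)) ?index_mem // nth_index.
Qed.

Lemma injective_self_map_onto (T : eqType) (P : T -> Prop) (U : seq T) (f : T -> T) :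
  (forall x, P x -> x \in U) -> (forall x, P x -> P (f x)) ->
  (forall x y, P x -> P y -> f x = f y -> x = y) ->
  forall y, P y -> exists x, P x /\ f x = y.
Proof.
move=> PU fP f_inj y Py.
pose p x : bool := excluded_middle_informative (P x).
have pP x : reflect (P x) (p x) by rewrite /p; case: excluded_middle_informative => h; constructor.
pose L := [seq x <- undup U | p x].
have memL x : (x \in L) = p x.
  by rewrite mem_filter mem_undup andb_idr // => /pP /PU.
have fL : {subset map f L <= L}.
  by move=> _ /mapP [x xL ->]; rewrite memL; apply/pP/fP/pP; rewrite -memL.
have uniq_fL : uniq (map f L).
  rewrite map_inj_in_uniq ?filter_uniq ?undup_uniq // => x1 x2 x1L x2L.
  by apply: f_inj; apply/pP; rewrite -memL.
have [_ /(_ y)] := uniq_min_size uniq_fL fL (eq_leq (esym (size_map f L))).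
rewrite memL (introT (pP y) Py) => /mapP [x xL ->].
by exists x; split=> //; apply/pP; rewrite -memL.
Qed.

Lemma maxw_ge w y : y \in w -> y <= maxw w.
Proof.
elim: w => //= a s IH; rewrite in_cons => /orP[/eqP->|/IH]; first exact: leq_maxl.
by move/leq_trans; apply; exact: leq_maxr.
Qed.

Lemma maxw_mem a s : maxw (a :: s) \in a :: s.
Proof.
elim: s a => [|b s IH] a /=; first by rewrite maxn0 mem_head.
by rewrite {1}/maxn; case: ifP => _; rewrite ?mem_head // in_cons (IH b) orbT.
Qed.

Lemma maxw_eq w m : m \in w -> all (fun y => y <= m) w -> maxw w = m.
Proof.
move=> mw /allP wm; apply/eqP; rewrite eqn_leq maxw_ge // andbT.
by case: w mw wm => // a s _; apply; exact: maxw_mem.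
Qed.

Fixpoint decreasing t := if t is BNode l m r then
  [&& all (fun y => y < m) (blabels l), all (fun y => y < m) (blabels r),
      decreasing l & decreasing r]
  else true.

Lemma dbt_f_spec k w : size w <= k -> uniq w ->
  decreasing (dbt_f k w) /\ blabels (dbt_f k w) = w.
Proof.
elim: k w => [|k IH] [|a s] //; set w := a :: s => sw uw.
set m := maxw w; set i := index m w.
have mw : m \in w by exact: maxw_mem.
have Ew := take_index_cat mw; rewrite -/i in Ew.
have Sw : size (take i w) + (size (drop i.+1 w)).+1 = size w.
  by rewrite -[RHS](congr1 size Ew) size_cat.
have /uniq_cat_cons [ul ur ml mr _] : uniq (take i w ++ m :: drop i.+1 w) by rewrite Ew.
have [dl El] := IH (take i w) ltac:(lia) ul.
have [dr Er] := IH (drop i.+1 w) ltac:(lia) ur.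
have lt_m y : y \in w -> y != m -> y < m by move=> yw ym; rewrite ltn_neqAle ym maxw_ge.
have -> : dbt_f k.+1 w = BNode (dbt_f k (take i w)) m (dbt_f k (drop i.+1 w)) by [].
rewrite /= El Er Ew dl dr !andbT; split=> //.
apply/andP; split; apply/allP=> y ys; apply: lt_m.
- by rewrite -Ew mem_cat ys.
- by apply: contraNneq ml => <-.
- by rewrite -Ew mem_cat in_cons ys !orbT.
- by apply: contraNneq mr => <-.
Qed.

Lemma dbtK w : uniq w -> blabels (dbt w) = w.
Proof. by move=> uw; case: (dbt_f_spec (leqnn _) uw). Qed.

Lemma decreasing_dbt w : uniq w -> decreasing (dbt w).
Proof. by move=> uw; case: (dbt_f_spec (leqnn _) uw). Qed.

Lemma dbt_f_blabels t k : decreasing t -> uniq (blabels t) -> size (blabels t) <= k ->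
  dbt_f k (blabels t) = t.
Proof.
elim: t k => [|l IHl m r IHr] [|k] //=; first by rewrite size_cat addnS.
case/and4P=> lm rm dl dr /uniq_cat_cons [ul ur ml mr _] sz.
have -> : maxw (blabels l ++ m :: blabels r) = m.
  apply: maxw_eq; first by rewrite mem_cat mem_head orbT.
  rewrite all_cat /= leqnn; apply/andP.
  by split; [apply: sub_all lm | apply: sub_all rm] => y /ltnW.
case E: (blabels l ++ m :: blabels r) => [|a s]; first by case: (blabels l) E.
rewrite -E index_cat (negbTE ml) /= eqxx addn0 take_size_cat //.
rewrite -cat_rcons drop_size_cat ?size_rcons //; rewrite size_cat /= in sz.
by rewrite IHl ?IHr //; lia.
Qed.

Lemma blabelsK t : decreasing t -> uniq (blabels t) -> dbt (blabels t) = t.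
Proof. by move=> dt ut; exact: dbt_f_blabels. Qed.

Definition isleaf t := if t is BLeaf then true else false.
Definition one_child l r := isleaf l != isleaf r.

Lemma blabels_eq0 t : (blabels t == [::]) = isleaf t.
Proof. by case: t => //= l m r; case: (blabels l). Qed.

Fixpoint flip (P : pred nat) t := if t is BNode l m r then
  if P m && one_child l r then BNode (flip P r) m (flip P l)
  else BNode (flip P l) m (flip P r)
  else BLeaf.

Lemma isleaf_flip P t : isleaf (flip P t) = isleaf t.
Proof. by case: t => //= l m r; case: ifP. Qed.

Lemma one_child_flip P l r : one_child (flip P l) (flip P r) = one_child l r.
Proof. by rewrite /one_child !isleaf_flip. Qed.

Lemma one_childC l r : one_child l r = one_child r l.
Proof. by rewrite /one_child eq_sym. Qed.

Lemma flip_flip P Q t : flip Q (flip P t) = flip (fun y => P y (+) Q y) t.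
Proof.
elim: t => //= l IHl m r IHr.
have oc : one_child (flip P r) (flip P l) = one_child l r by rewrite one_childC one_child_flip.
by case: (P m); case c: (one_child l r) => /=; rewrite ?oc ?one_child_flip ?c;
  case: (Q m); rewrite /= ?IHl ?IHr.
Qed.

Lemma eq_in_flip P Q t : {in blabels t, P =1 Q} -> flip P t = flip Q t.
Proof.
elim: t => //= l IHl m r IHr PQ.
rewrite PQ ?mem_cat ?mem_head ?orbT // IHl ?IHr // => y yt; apply: PQ;
  by rewrite mem_cat ?in_cons yt ?orbT.
Qed.

Lemma flip_pred0 t : flip xpred0 t = t.
Proof. by elim: t => //= l -> m r ->. Qed.

Lemma perm_flip P t : perm_eq (blabels (flip P t)) (blabels t).
Proof.
elim: t => //= l IHl m r IHr; case: ifP => _ /=; last by rewrite perm_cat // perm_cons.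
apply: perm_trans (_ : perm_eq _ (blabels r ++ m :: blabels l)) _.
  by rewrite perm_cat // perm_cons.
by apply/permP=> p; rewrite !count_cat /=; lia.
Qed.

Lemma decreasing_flip P t : decreasing t -> decreasing (flip P t).
Proof.
elim: t => //= l IHl m r IHr /and4P [lm rm dl dr].
by case: ifP => _ /=; rewrite !(perm_all _ (perm_flip P _)) lm rm IHl ?IHr.
Qed.

(* [b] is the parity of the number of right edges above the current node. *)
Fixpoint flip_odd t (b : bool) := if t is BNode l m r then
  if b && one_child l r then BNode (flip_odd r (~~ b)) m (flip_odd l b)
  else BNode (flip_odd l b) m (flip_odd r (~~ b))
  else BLeaf.

Lemma flip_oddE t b : uniq (blabels t) ->
  flip_odd t b = flip (fun y => b (+) odd (rights t y)) t.
Proof.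
elim: t b => //= l IHl m r IHr b /uniq_cat_cons [ul ur ml mr lr].
rewrite eqxx addbF IHl // IHr //.
have -> : flip (fun y => b (+) odd (rights l y)) l
        = flip (fun y => b (+) odd (rights (BNode l m r) y)) l.
  apply: eq_in_flip => y yl /=; rewrite yl ifN //.
  by apply: contraNneq ml => <-.
have -> // : flip (fun y => ~~ b (+) odd (rights r y)) r
           = flip (fun y => b (+) odd (rights (BNode l m r) y)) r.
apply: eq_in_flip => y yr /=; rewrite ifN; last by apply: contraNneq mr => <-.
by rewrite (negbTE (contraTN (lr y) yr)) /= addbN addNb.
Qed.

Lemma decreasing_flip_odd t b : decreasing t -> uniq (blabels t) ->
  decreasing (flip_odd t b).
Proof. by move=> dt ut; rewrite flip_oddE //; exact: decreasing_flip. Qed.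

Lemma perm_flip_odd t b : uniq (blabels t) -> perm_eq (blabels (flip_odd t b)) (blabels t).
Proof. by move=> ut; rewrite flip_oddE //; exact: perm_flip. Qed.

Lemma isleaf_flip_odd t b : isleaf (flip_odd t b) = isleaf t.
Proof. by case: t => //= l m r; case: ifP. Qed.

Lemma flip_odd_inj b : injective (flip_odd ^~ b).
Proof.
move=> t1 t2; elim: t1 t2 b => [|l1 IHl m1 r1 IHr] [|l2 m2 r2] b //=; try by case: ifP.
rewrite /one_child -(isleaf_flip_odd l1 b) -(isleaf_flip_odd r1 (~~ b)).
rewrite -(isleaf_flip_odd l2 b) -(isleaf_flip_odd r2 (~~ b)).
case: ifP => c1; case: ifP => c2 [E1 <- E2].
- by rewrite (IHl _ _ E2) (IHr _ _ E1).
- by move: c1 c2; rewrite E1 E2 eq_sym => ->.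
- by move: c1 c2; rewrite -E1 -E2 eq_sym => ->.
- by rewrite (IHl _ _ E1) (IHr _ _ E2).
Qed.

Lemma neighbours_cat (w u lam rho v : seq nat) x : w = u ++ lam ++ x :: rho ++ v ->
  x \notin u -> all (fun y => y < x) lam ->
  left_nb w x = last (sent w) (u ++ lam) /\ right_nb w x = head (sent w) (rho ++ v).
Proof.
move=> -> xu lamx.
have xlam : x \notin lam by apply/negP => /(allP lamx); rewrite ltnn.
rewrite catA /left_nb /right_nb.
rewrite index_cat mem_cat (negbTE xu) (negbTE xlam) /= eqxx addn0; split.
  set S := sent _; rewrite -(cat_cons S (u ++ lam)) nth_cat /= ltnSn.
  by rewrite -[size _]/((size (S :: u ++ lam)).-1) nth_last.
by rewrite nth_cat ltnNge leqnSn /= subSnn.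
Qed.

Lemma find_first_gap (rho v : seq nat) S x :
  rho != [::] -> all (fun y => y < x) rho -> x < head S v ->
  find (fun p : nat * nat => (p.1 < x) && (x < p.2))
       (zip (rho ++ v) (rcons (behead (rho ++ v)) S)) = (size rho).-1.
Proof.
elim: rho => [|a [|b rho] IH] //= _ /andP [ax rhox] xv.
  by clear IH; case: v xv => [|c v] /= ->; rewrite ax.
by move: (rhox) => /andP [bx _]; rewrite [x < b]ltnNge (ltnW bx) andbF IH.
Qed.

Lemma move_right_cat (u rho v : seq nat) x :
  x \notin u -> rho != [::] -> all (fun y => y < x) rho ->
  x < head (sent (u ++ x :: rho ++ v)) v ->
  move_right (u ++ x :: rho ++ v) x = u ++ rho ++ x :: v.
Proof.
move=> xu rho0 rhox xv; rewrite /move_right index_cat (negbTE xu) /= eqxx addn0.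
rewrite take_size_cat // drop_cat ltnNge leqnSn /= subSnn /= drop0.
rewrite find_first_gap // prednK ?lt0n ?size_eq0 //.
by rewrite take_size_cat // drop_size_cat.
Qed.

Lemma phi'_cat (w u lam rho v : seq nat) x : w = u ++ lam ++ x :: rho ++ v ->
  x \notin u -> x \notin v -> all (fun y => y < x) lam -> all (fun y => y < x) rho ->
  x < last (sent w) u -> x < head (sent w) v ->
  phi' x w = if (lam == [::]) != (rho == [::]) then u ++ rho ++ x :: lam ++ v else w.
Proof.
move=> wE xu xv lamx rhox xu' xv'.
have xw : x \in w by rewrite wE !mem_cat mem_head !orbT.
rewrite /phi' /is_dd /is_da xw /=.
have [-> ->] := neighbours_cat wE xu lamx.
case: lam wE lamx => [|a ls] wE lamx; case: rho wE rhox => [|b rs] wE /= rhox.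
- by rewrite cats0 (leq_gtF (ltnW xu')) (leq_gtF (ltnW xv')) andbF.
- have bx : b < x by case/andP: rhox.
  rewrite cats0 xu' bx /= {1}wE move_right_cat //.
  by move: xv'; rewrite wE.
- have lastx : last a ls < x by apply: (allP lamx); exact: mem_last.
  rewrite last_cat /= (leq_gtF (ltnW lastx)) lastx xv' /=.
  have rwE : rev w = rev v ++ x :: rev (a :: ls) ++ rev u.
    by rewrite wE !rev_cat /= rev_cons -cats1 -!catA.
  have sentE : sent (rev w) = sent w by rewrite /sent size_rev.
  rewrite rwE move_right_cat ?mem_rev ?all_rev -?rwE ?sentE ?head_rev //.
  + by rewrite !rev_cat /= !rev_cons rev_rcons !revK -catA cat_rcons.
  + by rewrite -size_eq0 size_rev.
- have lastx : last a ls < x by apply: (allP lamx); exact: mem_last.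
  case/andP: rhox => bx _.
  by rewrite last_cat /= (leq_gtF (ltnW lastx)) (leq_gtF (ltnW bx)) !andbF.
Qed.

Lemma flip_pred1_notin x t : x \notin blabels t -> flip (pred1 x) t = t.
Proof.
move=> xt; rewrite -[RHS](flip_pred0 t); apply: eq_in_flip => y yt /=.
by apply: contraNF xt => /eqP <-.
Qed.

Lemma blabels_split_at t x : decreasing t -> uniq (blabels t) -> x \in blabels t ->
  exists u v l r, [/\ blabels t = u ++ blabels l ++ x :: blabels r ++ v,
    blabels (flip (pred1 x) t) =
      if one_child l r then u ++ blabels r ++ x :: blabels l ++ v else blabels t,
    all (fun y => y < x) (blabels l) && all (fun y => y < x) (blabels r),
    (forall N, x < N -> x < last N u) & (forall N, x < N -> x < head N v)].
Proof.
elim: t => //= l IHl m r IHr /and4P [lm rm dl dr] /uniq_cat_cons [ul ur ml mr lr].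
rewrite mem_cat in_cons; case: (eqVneq x m) => [->|xm] /= xt.
  exists [::], [::], l, r; rewrite cats0 lm rm !flip_pred1_notin //.
  by split=> //; case: ifP; rewrite //= cats0.
case/orP: xt => [xl | xr].
  have [u [v [l' [r' [E1 E2 lrx xu xv]]]]] := IHl dl ul xl.
  have x_lt_m : x < m by apply: (allP lm).
  exists u, (v ++ m :: blabels r), l', r'; split=> //.
  - by rewrite E1 -!catA /= -!catA.
  - rewrite (flip_pred1_notin (lr x xl)).
    by rewrite E2 E1; case: ifP => _; rewrite -!catA /= -!catA.
  - by move=> N _; case: v {E1 E2 xv} (xv m x_lt_m).
have [u [v [l' [r' [E1 E2 lrx xu xv]]]]] := IHr dr ur xr.
exists (blabels l ++ m :: u), v, l', r'; split=> //.
- by rewrite E1 -!catA.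
- rewrite (flip_pred1_notin (_ : x \notin blabels l)); last by apply: contraTN xr => /lr.
  by rewrite E2 E1; case: ifP => _; rewrite -?catA.
- by move=> N _; rewrite last_cat; apply: xu; apply: (allP rm).
Qed.

Lemma phi'_flip t x : decreasing t -> uniq (blabels t) ->
  all (fun y => y < sent (blabels t)) (blabels t) ->
  phi' x (blabels t) = blabels (flip (pred1 x) t).
Proof.
move=> dt ut tS; case/boolP: (x \in blabels t) => xt; last first.
  by rewrite /phi' /is_dd /is_da (negbTE xt) flip_pred1_notin.
have [u [v [l [r [E1 -> /andP [lx rx] xu xv]]]]] := blabels_split_at dt ut xt.
have xS : x < sent (blabels t) by apply: (allP tS).
have /uniq_cat_cons [_ _ xul xrv _] : uniq ((u ++ blabels l) ++ x :: blabels r ++ v).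
  by rewrite -catA -E1.
rewrite (phi'_cat E1) ?(xu _ xS) ?(xv _ xS) //; last 2 first.
- by apply: contra xul; rewrite mem_cat => ->.
- by apply: contra xrv; rewrite mem_cat orbC => ->.
by rewrite /one_child -!blabels_eq0.
Qed.

Lemma foldr_phi' t s : decreasing t -> uniq (blabels t) ->
  all (fun y => y < sent (blabels t)) (blabels t) ->
  foldr phi' (blabels t) s = blabels (flip (fun y => odd (count_mem y s)) t).
Proof.
move=> dt ut tS; elim: s => [|x s IH] /=; first by rewrite flip_pred0.
have p := perm_flip (fun y => odd (count_mem y s)) t.
rewrite IH phi'_flip ?decreasing_flip ?(perm_uniq p) //; last first.
  by rewrite /sent (perm_size p) (perm_all _ p).
rewrite flip_flip; congr blabels; apply: eq_in_flip => y _ /=.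
by rewrite oddD eq_sym addbC; case: (x == y).
Qed.

Lemma des_cons2 a b s : des [:: a, b & s] = (b < a) + des (b :: s).
Proof. by []. Qed.

Lemma des_cat_cons s x t : des (s ++ x :: t) = des (rcons s x) + des (x :: t).
Proof. by elim: s => [|a [|b s] IH] //=; rewrite !des_cons2 -addnA -IH. Qed.

Lemma des_rcons_max s x : all (fun y => y < x) s -> des (rcons s x) = des s.
Proof.
elim: s => [|a [|b s] IH] //= /andP [ax sx]; first by rewrite /des /= ltnNge ltnW.
by rewrite !des_cons2 IH.
Qed.

Lemma des_cons_max x s : all (fun y => y < x) s -> des (x :: s) = (s != [::]) + des s.
Proof. by case: s => [|b s] //= /andP [bx _]; rewrite des_cons2 bx. Qed.

Fixpoint tdes t := if t is BNode l _ r then ~~ isleaf r + tdes l + tdes r else 0.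

Lemma des_blabels t : decreasing t -> des (blabels t) = tdes t.
Proof.
elim: t => //= l IHl m r IHr /and4P [lm rm dl dr].
rewrite des_cat_cons des_rcons_max // des_cons_max // IHl // IHr // blabels_eq0.
by rewrite addnCA addnA.
Qed.

Fixpoint count_odd_rights t (b : bool) :=
  if t is BNode l _ r then b + count_odd_rights l b + count_odd_rights r (~~ b) else 0.

Lemma count_odd_rights_flip_odd t b :
  count_odd_rights t b = tdes (flip_odd t b) + (b && ~~ isleaf t).
Proof.
elim: t b => [|l IHl m r IHr] [] //=; rewrite IHl IHr /one_child;
  case El: (isleaf l); case Er: (isleaf r); rewrite /= ?isleaf_flip_odd ?El ?Er /=; lia.
Qed.

Lemma lrblocks_f_nil k : lrblocks_f k [::] = [::].
Proof. by case: k. Qed.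

Lemma lrblocks_f_fuel k1 k2 s : size s <= k1 -> size s <= k2 ->
  lrblocks_f k1 s = lrblocks_f k2 s.
Proof.
elim: k1 k2 s => [|k1 IH] [|k2] [|a s] //= s1 s2.
by congr (_ :: _); apply: IH; rewrite size_drop; lia.
Qed.

Lemma lrblocks_f_cat k s m r : size (s ++ m :: r) <= k ->
  all (fun y => y < m) s -> all (fun y => y < m) r ->
  lrblocks_f k (s ++ m :: r) = lrblocks_f k s ++ [:: (m, r)].
Proof.
move=> + + rm; elim: k s => [|k IH] [|a s] //= sk.
  have -> : find (fun b => m < b) r = size r.
    by apply: hasNfind; apply/hasPn => y /(allP rm) /ltnW; rewrite leqNgt.
  by rewrite take_size drop_size lrblocks_f_nil.
case/andP=> am sm; set j := find (fun b => a < b) s.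
have js : j <= size s by exact: find_size.
have jE : find (fun b => a < b) (s ++ m :: r) = j.
  by rewrite find_cat /j; case: ifPn => // /hasNfind ->; rewrite /= am addn0.
rewrite [find _ (s ++ m :: r)]jE takel_cat //.
have -> : drop j (s ++ m :: r) = drop j s ++ m :: r.
  rewrite drop_cat; case: ltnP => // sj.
  by rewrite (drop_oversize sj) (_ : j - size s = 0) //; lia.
rewrite IH //.
  by move: sk; rewrite !size_cat size_drop /=; lia.
by apply/allP => y /mem_drop /(allP sm).
Qed.

Definition forest_even k w h :=
  sumn [seq even_count (utree_f k p.2 p.1) h | p <- lrblocks w].

Lemma vehE w : veh w = forest_even (size w) w 1.
Proof. by rewrite /veh /= /forest_even -map_comp. Qed.

Lemma forest_even_blabels t k h : decreasing t -> size (blabels t) <= k ->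
  forest_even k (blabels t) h = count_odd_rights t (~~ odd h).
Proof.
elim: t k h => [|l IHl m r IHr] k h //= /and4P [lm rm dl dr] tk.
have lt : size (blabels l) <= size (blabels l ++ m :: blabels r) by rewrite size_cat leq_addr.
rewrite /forest_even /lrblocks lrblocks_f_cat // (@lrblocks_f_fuel _ (size (blabels l))) //.
case: k tk => [|k]; rewrite size_cat /= ?addnS // => tk.
rewrite map_cat sumn_cat /= addn0 -map_comp.
rewrite -/(forest_even k.+1 (blabels l) h) -/(forest_even k (blabels r) h.+1) IHl ?IHr //; try lia.
by rewrite oddS negbK addnCA addnA.
Qed.

Section PermutationWords.

Variables (n : nat) (w : seq nat).
Hypothesis w_perm : is_perm_word n w.

Lemma perm_word_uniq : uniq w.
Proof. by rewrite (perm_uniq w_perm) iota_uniq. Qed.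

Lemma perm_word_size : size w = n.
Proof. by rewrite (perm_size w_perm) size_iota. Qed.

Lemma perm_word_mem y : (y \in w) = (0 < y < sent w).
Proof. by rewrite (perm_mem w_perm) mem_iota /sent perm_word_size add1n. Qed.

Lemma Odd_in_range : all (fun x => 1 <= x <= n) (Odd w).
Proof. by apply/allP => x; rewrite mem_filter mem_iota perm_word_size add1n ltnS => /andP []. Qed.

Lemma Psi'E : Psi' w = blabels (flip_odd (dbt w) false).
Proof.
have uw := perm_word_uniq; have bw := dbtK uw.
rewrite /Psi' -[in foldr _ w]bw foldr_phi' ?decreasing_dbt ?bw //; last first.
  by apply/allP => y; rewrite perm_word_mem => /andP [].
rewrite flip_oddE ?bw //; congr blabels; apply: eq_in_flip => y; rewrite bw => yw.
rewrite count_uniq_mem ?filter_uniq ?iota_uniq // mem_filter mem_iota add1n.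
by rewrite -[(size w).+1]/(sent w) -perm_word_mem yw andbT oddb.
Qed.

Lemma dbt_Psi' : dbt (Psi' w) = flip_odd (dbt w) false.
Proof.
have uw := perm_word_uniq; have udw : uniq (blabels (dbt w)) by rewrite dbtK.
by rewrite Psi'E blabelsK ?decreasing_flip_odd ?decreasing_dbt ?(perm_uniq (perm_flip_odd _ udw)).
Qed.

Lemma veh_Psi' : veh w = des (Psi' w).
Proof.
have uw := perm_word_uniq; have dw := decreasing_dbt uw.
rewrite vehE -{1 2}(dbtK uw) forest_even_blabels // count_odd_rights_flip_odd addn0.
by rewrite Psi'E des_blabels // decreasing_flip_odd ?dbtK.
Qed.

End PermutationWords.

Lemma Psi'_inj n w1 w2 : is_perm_word n w1 -> is_perm_word n w2 ->
  Psi' w1 = Psi' w2 -> w1 = w2.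
Proof.
move=> p1 p2 /(congr1 dbt); rewrite (dbt_Psi' p1) (dbt_Psi' p2) => /flip_odd_inj E.
by rewrite -(dbtK (perm_word_uniq p1)) E dbtK // (perm_word_uniq p2).
Qed.

Theorem theorem7p2 (n : nat) (T : seq nat -> Prop)
  (HT : forall w, T w -> is_perm_word n w)
  (Hinv : forall (x : nat) (w : seq nat), 1 <= x <= n -> T w -> T (phi' x w)) :
  [/\ (forall w, T w -> T (Psi' w)),
      (forall w1 w2, T w1 -> T w2 -> Psi' w1 = Psi' w2 -> w1 = w2),
      (forall s, T s -> exists w, T w /\ Psi' w = s) &
      (forall w, T w -> veh w = des (Psi' w))].
Proof.
have Psi'T w : T w -> T (Psi' w).
  move=> Tw; move: (Odd_in_range (HT w Tw)); rewrite /Psi'.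
  by elim: (Odd w) => //= x s IH /andP [xn sn]; apply: Hinv xn (IH sn).
have Psi'_injT w1 w2 : T w1 -> T w2 -> Psi' w1 = Psi' w2 -> w1 = w2.
  by move=> /HT p1 /HT p2; exact: Psi'_inj p1 p2.
split=> //; last by move=> w /HT /veh_Psi'.
by apply: (injective_self_map_onto (U := permutations (iota 1 n))) Psi'T Psi'_injT => w /HT;
  rewrite mem_permutations.
Qed.
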